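(* Let $K$ be a finite simplicial complex, $N\subseteq K$ closed, and $\mathcal V_1,\mathcal V_2$ multivector fields on $K$ with $\mathcal V_2\sqsubseteq\mathcal V_1$. Let $M_1$ be an isolated invariant set under $\mathcal V_1$ isolated by $N$, and let $M_2$ be a minimal Morse set in $N$ under $\mathcal V_2$ (an isolated invariant set under $\mathcal V_2$, isolated by $N$, which is minimal). If $M_1\cap M_2\neq\emptyset$, then $M_2\subseteq M_1$.
   Context: $\sigma\le\tau$ means $\sigma$ is a face of $\tau$; $\mathrm{cl}(A)$ is the set of faces of simplices in $A$; $A$ is closed if $A=\mathrm{cl}(A)$. A multivector is a convex subset of $K$ w.r.t. $\le$; a multivector field $\mathcal V$ is a partition of $K$ into multivectors; $[\sigma]_{\mathcal V}$ is the multivector containing $\sigma$. $\mathcal V_2\sqsubseteq\mathcal V_1$ means each multivector of $\mathcal V_2$ is contained in one of $\mathcal V_1$. $F_{\mathcal V}(\sigma)=[\sigma]_{\mathcal V}\cup\mathrm{cl}(\sigma)$. A path is a finite sequence $\sigma_0,\dots,\sigma_m$ with $\sigma_j\in F_{\mathcal V}(\sigma_{j-1})$; a solution is a bi-infinite such sequence. A multivector $V$ is critical if $H_k(\mathrm{cl}(V),\mathrm{cl}(V)\setminus V)\neq0$ for some $k$ (coefficients in a finite field), regular otherwise. A solution $\rho:\mathbb Z\to K$ is essential if for each $i$ with $[\rho(i)]_{\mathcal V}$ regular there exist $i^-<i<i^+$ with $[\rho(i^-)]_{\mathcal V}\ne[\rho(i)]_{\mathcal V}\ne[\rho(i^+)]_{\mathcal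 V}$. $\mathrm{inv}_{\mathcal V}(A)$ is the set of $\sigma\in A$ that lie on some essential solution with image in $A$; $S$ is invariant if $\mathrm{inv}_{\mathcal V}(S)=S$. An invariant set $S$ is isolated by the closed set $N$ if $S$ is a union of multivectors of $\mathcal V$ and every path $\rho:\mathbb Z\cap[a,b]\to N$ with $\rho(a),\rho(b)\in S$ has image in $S$. A Morse decomposition of $S$ indexed by a finite poset $\mathbb P$ is a family $\{M_p\}$ of mutually disjoint isolated invariant subsets of $S$ such that every essential solution $\rho$ in $S$ either has image in a single $M_r$ or satisfies $\alpha(\rho)\subseteq M_q$, $\omega(\rho)\subseteq M_p$ with $q>p$ ($\alpha(\rho)=\bigcap_{i\ge1}\rho((-\infty,-i])$, $\omega(\rho)=\bigcap_{i\ge1}\rho([i,\infty))$). $S$ is minimal if its only Morse decomposition is $\{S\}$. *)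

From HB Require Import structures.
From mathcomp Require Import all_boot all_order all_algebra.
Set Implicit Arguments. Unset Strict Implicit. Unset Printing Implicit Defensive.
Import Order.TTheory GRing.Theory Num.Theory.

(* Abstract finite simplicial complexes on a finite vertex type Vx.
   A simplex is a nonempty finite set of vertices; the face relation is
   set inclusion. *)
Section Defs.
Variable Vx : finType.
Notation simplex := {set Vx}.
Notation cplx := {set {set Vx}}.

Definition is_complex (K : cplx) : Prop :=
  set0 \notin K /\
  forall s t : simplex, s \in K -> t \subset s -> t != set0 -> t \in K.

Definition cl (K A : cplx) : cplx :=
  [set t in K | [exists s in A, t \subset s]].

Definition is_closed (K A : cplx) : Prop := A \subset K /\ cl K A = A.

Definition convex (K A : cplx) : Prop :=
  forall s r t, s \in A -> t \in A -> r \in K -> s \subset r -> r \subset t ->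
    r \in A.

Definition mvf (K : cplx) (mV : {set cplx}) : Prop :=
  partition mV K /\ forall A, A \in mV -> convex K A.

Definition mv (mV : {set cplx}) (s : simplex) : cplx := pblock mV s.

Definition refines (mV2 mV1 : {set cplx}) : Prop :=
  forall A, A \in mV2 -> exists2 B, B \in mV1 & A \subset B.

Definition Fv (K : cplx) (mV : {set cplx}) (s : simplex) : cplx :=
  mv mV s :|: cl K [set s].

(* ---------- relative simplicial homology H_k(cl A, cl A \ A; F) ----------
   The relative chain complex of the pair (cl A, cl A \ A) has as basis in
   degree k the k-simplices (k+1 vertices) of A, and the boundary is the
   usual simplicial boundary followed by the projection killing faces
   outside A.  Vertices are ordered by enum_rank; chains are row vectors
   indexed by all vertex sets, and bd A k is the matrix of the boundary
   C_k -> C_{k-1}. *)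
Definition vsign (F : nzRingType) (s t : simplex) : F :=
  ((-1) ^+ (\sum_(v in s :\: t) #|[set u in s | enum_rank u < enum_rank v]|)%N)%R.

Definition bd (F : nzRingType) (A : cplx) (k : nat) : 'M[F]_(#|{: simplex}|) :=
  \matrix_(i, j)
    let s := enum_val i in let t := enum_val j in
    if [&& s \in A, t \in A, #|s| == k.+1, t \subset s & #|t| == k]
    then vsign F s t else 0%R.

Definition nsimp (A : cplx) (k : nat) : nat := #|[set s in A | #|s| == k.+1]|.

(* dim H_k = dim ker bd_k - dim im bd_{k+1}
           = nsimp k - rank bd_k - rank bd_{k+1};
   H_k <> 0 iff this is positive. *)
Definition relH_nonzero (F : fieldType) (A : cplx) (k : nat) : Prop :=
  (\rank (bd F A k) + \rank (bd F A k.+1) < nsimp A k)%N.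

Definition critical (F : fieldType) (A : cplx) : Prop :=
  exists k, relH_nonzero F A k.

Definition regular (F : fieldType) (A : cplx) : Prop := ~ critical F A.

Definition is_solution (K : cplx) (mV : {set cplx}) (rho : int -> simplex) : Prop :=
  forall i : int, rho (i + 1)%R \in Fv K mV (rho i).

Definition essential (F : fieldType) (K : cplx) (mV : {set cplx})
    (rho : int -> simplex) : Prop :=
  is_solution K mV rho /\
  forall i : int, regular F (mv mV (rho i)) ->
    (exists2 im : int, (im < i)%R & mv mV (rho im) != mv mV (rho i)) /\
    (exists2 ip : int, (i < ip)%R & mv mV (rho ip) != mv mV (rho i)).

Definition image_in (rho : int -> simplex) (A : cplx) : Prop :=
  forall i, rho i \in A.

(* inv_V(A) as a predicate on simplices (membership is not decidable
   constructively, so it is a Prop-valued set). *)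
Definition in_inv (F : fieldType) (K : cplx) (mV : {set cplx}) (A : cplx)
    (s : simplex) : Prop :=
  s \in A /\ exists rho, [/\ essential F K mV rho, image_in rho A &
                                    exists i, rho i = s].

Definition invariant (F : fieldType) (K : cplx) (mV : {set cplx}) (S : cplx) : Prop :=
  forall s, in_inv F K mV S s <-> s \in S.

Definition fpath (K : cplx) (mV : {set cplx}) (x : simplex) (p : seq simplex) : bool :=
  path (fun a b => b \in Fv K mV a) x p.

Definition isolated_by (F : fieldType) (K : cplx) (mV : {set cplx}) (S N : cplx) : Prop :=
  [/\ invariant F K mV S, is_closed K N, S \subset N,
      (forall s, s \in S -> mv mV s \subset S) &
      (forall x p, fpath K mV x p -> all (mem N) (x :: p) ->
         x \in S -> last x p \in S -> all (mem S) (x :: p))].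

Definition isolated_invariant (F : fieldType) (K : cplx) (mV : {set cplx}) (S : cplx) : Prop :=
  exists N, isolated_by F K mV S N.

Definition alpha (rho : int -> simplex) (s : simplex) : Prop :=
  forall i : nat, (0 < i)%N -> exists2 j : int, (j <= - (i%:Z))%R & rho j = s.
Definition omega (rho : int -> simplex) (s : simplex) : Prop :=
  forall i : nat, (0 < i)%N -> exists2 j : int, (i%:Z <= j)%R & rho j = s.

(* Morse decomposition of S indexed by a finite poset ('I_n, lt),
   lt the strict order; "q > p" is lt p q. *)
Definition morse_decomposition (F : fieldType) (K : cplx) (mV : {set cplx}) (S : cplx)
    (n : nat) (lt : rel 'I_n) (M : 'I_n -> cplx) : Prop :=
  [/\ irreflexive lt, transitive lt,
      (forall p q, p != q -> [disjoint M p & M q]),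
      (forall p, M p \subset S /\ isolated_invariant F K mV (M p)) &
      (forall rho, essential F K mV rho -> image_in rho S ->
         (exists r, image_in rho (M r)) \/
         (exists p q, [/\ lt p q, (forall s, alpha rho s -> s \in M q) &
                                  (forall s, omega rho s -> s \in M p)]))].

(* S is minimal: its only Morse decomposition is {S}, i.e. in every Morse
   decomposition each Morse set is S itself or empty. *)
Definition minimal (F : fieldType) (K : cplx) (mV : {set cplx}) (S : cplx) : Prop :=
  forall n (lt : rel 'I_n) (M : 'I_n -> cplx),
    morse_decomposition F K mV S lt M -> forall p, M p = S \/ M p = set0.

End Defs.

(* Let a be a point of M1 :&: M2. The set C of points reachable from a by
   V2-paths inside M2 is forward closed in M2, so the invariant parts of C and
   of M2 :\: C form a Morse decomposition of M2: a solution that has entered C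
   never leaves it. By minimality the invariant part of M2 :\: C is either all
   of M2, impossible since a is in C, or empty; in the latter case every point
   of M2 is in C, since a point outside C has its whole past outside C and
   hence an alpha-limit point in the invariant part of M2 :\: C. Thus every
   s in M2 lies on a V2-loop through a inside M2. As V2 refines V1, this loop
   is a V1-path in N from M1 to M1, so the isolation of M1 puts s in M1. *)

From Pilot Require Import Defs.
From mathcomp Require Import all_boot all_order all_algebra zify boolp.
Set Implicit Arguments. Unset Strict Implicit. Unset Printing Implicit Defensive.
Import Order.TTheory GRing.Theory Num.Theory.
Local Open Scope ring_scope.

Section LimitSets.
Variable Vx : finType.
Implicit Type rho : int -> {set Vx}.

Lemma omega_exists rho : exists s, omega rho s.
Proof.
apply: contrapT => /forallNP no_omega.
have bound (s : {set Vx}) : exists i : nat, forall j, i%:Z <= j -> rho j != s.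
  have /existsNP [i /not_implyP [_ /forall2NP never]] := no_omega s.
  by exists i => j ij; apply/eqP => rhoj; have [] := never j.
have [f fP] := choice bound.
set I := (\max_s f s)%N.
by have := fP (rho I%:Z) I%:Z; rewrite eqxx lez_nat leq_bigmax => /(_ isT).
Qed.

Lemma alpha_exists rho : exists s, alpha rho s.
Proof.
have [s om] := omega_exists (fun k => rho (- k)).
exists s => i i0; have [j ij <-] := om i i0.
by exists (- j); rewrite ?lerN2.
Qed.

End LimitSets.

Section EssentialSolutions.
Variables (F : fieldType) (Vx : finType) (K : {set {set Vx}}) (V : {set {set {set Vx}}}).
Implicit Types (rho sig : int -> {set Vx}) (S T C N : {set {set Vx}}).

Definition changes_before sig k :=
  regular F (mv V (sig k)) -> exists2 k', k' < k & mv V (sig k') != mv V (sig k).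

Definition changes_after sig k :=
  regular F (mv V (sig k)) -> exists2 k', k < k' & mv V (sig k') != mv V (sig k).

Lemma essential_of_changes sig :
  is_solution K V sig -> (forall k, changes_before sig k) ->
  (forall k, changes_after sig k) -> essential F K V sig.
Proof. by move=> sol before after; split=> // k reg; split; [apply: before|apply: after]. Qed.

Lemma changes_before_from sig k0 :
  (forall k, k <= k0 -> changes_before sig k) -> forall k, changes_before sig k.
Proof.
move=> early k; have [kk0|k0k] := leP k k0; first exact: early.
have [same|] := eqVneq (mv V (sig k0)) (mv V (sig k)); last by exists k0.
rewrite /changes_before -same => reg; have [k' k'k0 diff] := early k0 (lexx _) reg.
by exists k' => //; apply: lt_trans k0k.
Qed.

Lemma changes_after_from sig k0 :
  (forall k, k0 <= k -> changes_after sig k) -> forall k, changes_after sig k.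
Proof.
move=> late k; have [k0k|kk0] := leP k0 k; first exact: late.
have [same|] := eqVneq (mv V (sig k0)) (mv V (sig k)); last by exists k0.
rewrite /changes_after -same => reg; have [k' k0k' diff] := late k0 (lexx _) reg.
by exists k' => //; apply: lt_trans k0k'.
Qed.

Lemma changes_before_shift rho sig i k0 :
  essential F K V rho -> (forall k, k <= k0 -> sig k = rho (i + k)) ->
  forall k, k <= k0 -> changes_before sig k.
Proof.
move=> [_ ess] eq_sig k kk0; rewrite /changes_before eq_sig // => reg.
have [[k' k'ik diff] _] := ess _ reg.
exists (k' - i); first lia.
by rewrite eq_sig ?subrKC //; lia.
Qed.

Lemma changes_after_shift rho sig i k0 :
  essential F K V rho -> (forall k, k0 <= k -> sig k = rho (i + k)) ->
  forall k, k0 <= k -> changes_after sig k.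
Proof.
move=> [_ ess] eq_sig k k0k; rewrite /changes_after eq_sig // => reg.
have [_ [k' ikk' diff]] := ess _ reg.
exists (k' - i); first lia.
by rewrite eq_sig ?subrKC //; lia.
Qed.

Section PeriodicExtension.
Variables (rho : int -> {set Vx}) (j L : int).
Hypotheses (L_gt0 : 0 < L) (rho_period : rho (j + L) = rho j).

Definition periodic_ext k := rho (j + (k %% L)%Z).

Lemma periodic_ext_mod k : periodic_ext (k %% L)%Z = periodic_ext k.
Proof. by rewrite /periodic_ext modz_mod. Qed.

Lemma periodic_extMD n k : periodic_ext (n * L + k) = periodic_ext k.
Proof. by rewrite /periodic_ext modzMDl. Qed.

Lemma periodic_ext_range k : 0 <= (k %% L)%Z < L.
Proof. by rewrite modz_ge0 ?ltz_pmod ?lt0r_neq0. Qed.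

Lemma periodic_extE n : 0 <= n <= L -> periodic_ext n = rho (j + n).
Proof.
case/andP=> n_ge0; rewrite le_eqVlt => /orP[/eqP-> | nL].
  by rewrite /periodic_ext modzz addr0 rho_period.
by rewrite /periodic_ext modz_small ?n_ge0.
Qed.

Lemma periodic_ext_solution : is_solution K V rho -> is_solution K V periodic_ext.
Proof.
move=> sol k; have /andP[r_ge0 rL] := periodic_ext_range k.
rewrite -periodic_ext_mod -modzDml periodic_ext_mod -(periodic_ext_mod k).
by rewrite !periodic_extE ?addrA ?r_ge0 ?(ltW rL) //; lia.
Qed.

Lemma periodic_ext_essential :
  is_solution K V rho ->
  (forall k, regular F (mv V (periodic_ext k)) ->
     exists k', mv V (periodic_ext k') != mv V (periodic_ext k)) ->
  essential F K V periodic_ext.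
Proof.
move=> sol somewhere_else; apply: essential_of_changes; first exact: periodic_ext_solution.
- move=> k /somewhere_else[k' diff].
  exists (- (`|k - k'|%N + 1)%:Z * L + k'); last by rewrite periodic_extMD.
  nia.
- move=> k /somewhere_else[k' diff].
  exists ((`|k - k'|%N + 1)%:Z * L + k'); last by rewrite periodic_extMD.
  nia.
Qed.

End PeriodicExtension.

(* Running around the loop from [j] to [j'] forever gives an essential solution. *)
Lemma in_inv_segment rho T j j' :
  is_solution K V rho -> j < j' -> rho j' = rho j ->
  (forall k, j <= k <= j' -> rho k \in T) ->
  critical F (mv V (rho j)) \/
    (exists2 k, j <= k <= j' & mv V (rho k) != mv V (rho j)) ->
  in_inv F K V T (rho j).
Proof.
move=> sol jj' loop inT crit_or_moves.
set L := j' - j; have L_gt0 : 0 < L by rewrite subr_gt0.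
have period : rho (j + L) = rho j by rewrite subrKC.
pose sig := periodic_ext rho j L.
have sigE n : 0 <= n <= L -> sig n = rho (j + n) by exact: periodic_extE.
have sig_range k : exists2 n, 0 <= n <= L & sig k = rho (j + n).
  have /andP[n0 nL] := periodic_ext_range L_gt0 k.
  by exists (k %% L)%Z; rewrite ?n0 ?ltW.
have sig0 : sig 0 = rho j by rewrite sigE ?lexx ?ltW ?addr0.
split; first by rewrite inT ?lexx ?ltW.
exists sig; split.
- apply: periodic_ext_essential => // k; rewrite -/sig => reg.
  case: crit_or_moves => [crit | [k0 /andP[jk0 k0j'] moved]].
    by exists 0; rewrite sig0; apply/eqP => same; apply: reg; rewrite -same.
  have [same|] := eqVneq (mv V (rho j)) (mv V (sig k)); last by exists 0; rewrite sig0.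
  by exists (k0 - j); rewrite sigE ?subrKC -?same //; lia.
- move=> k; have [n /andP[n0 nL] ->] := sig_range k; apply: inT; lia.
- by exists 0.
Qed.

Lemma in_inv_alpha rho T m s :
  essential F K V rho -> (forall k, k <= m -> rho k \in T) -> alpha rho s ->
  in_inv F K V T s.
Proof.
move=> [sol ess] inT al.
have visit b : exists2 j, j <= b & rho j = s.
  by have [j jb rhoj] := al `|b|.+1 isT; exists j => //; lia.
have [j' j'm rhoj'] := visit m.
have inT' j : j <= j' -> rho j \in T by move=> jj'; apply/inT/le_trans/j'm.
have [crit|reg] := pselect (critical F (mv V s)).
  have [j jj' rhoj] := visit (j' - 1); rewrite -rhoj.
  apply: (in_inv_segment (j' := j')); rewrite ?rhoj' ?rhoj //; first lia.
  - by move=> k /andP[_ kj']; apply: inT'.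
  - by left.
have /ess[[k kj' moved] _] : regular F (mv V (rho j')) by rewrite rhoj'.
have [j jk rhoj] := visit k; rewrite -rhoj.
apply: (in_inv_segment (j' := j')); rewrite ?rhoj' ?rhoj //; first lia.
- by move=> l /andP[_ lj']; apply: inT'.
- by right; exists k; rewrite ?jk ?(ltW kj') // -rhoj'.
Qed.

Lemma in_inv_omega rho T m s :
  essential F K V rho -> (forall k, m <= k -> rho k \in T) -> omega rho s ->
  in_inv F K V T s.
Proof.
move=> [sol ess] inT om.
have visit b : exists2 j, b <= j & rho j = s.
  by have [j bj rhoj] := om `|b|.+1 isT; exists j => //; lia.
have [j mj rhoj] := visit m.
have inT' j' : j <= j' -> rho j' \in T by move=> jj'; apply/inT/le_trans/jj'.
rewrite -rhoj.
have [crit|reg] := pselect (critical F (mv V s)).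
  have [j' jj' rhoj'] := visit (j + 1).
  apply: (in_inv_segment (j' := j')); rewrite ?rhoj' ?rhoj //; first lia.
  - by move=> k /andP[jk _]; apply: inT'.
  - by left.
have /ess[_ [k jk moved]] : regular F (mv V (rho j)) by rewrite rhoj.
have [j' kj' rhoj'] := visit k.
apply: (in_inv_segment (j' := j')); rewrite ?rhoj' ?rhoj //; first lia.
- by move=> l /andP[jl _]; apply: inT'.
- by right; exists k; rewrite ?kj' ?(ltW jk) // -rhoj.
Qed.

Section Concatenation.
Variables (r1 r2 : int -> {set Vx}) (i1 i2 : int) (x : {set Vx}) (p : seq {set Vx}).
Hypotheses (r1_x : r1 i1 = x) (r2_last : r2 i2 = last x p).

Definition concat_path k :=
  if k <= 0 then r1 (i1 + k)
  else if k <= (size p)%:Z then nth x (x :: p) `|k|%N else r2 (i2 - (size p)%:Z + k).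

Lemma concat_path_past k : k <= 0 -> concat_path k = r1 (i1 + k).
Proof. by rewrite /concat_path => ->. Qed.

Lemma concat_path_nth (a : nat) : (a <= size p)%N -> concat_path a%:Z = nth x (x :: p) a.
Proof.
case: a => [|a] ap; first by rewrite concat_path_past // addr0.
have a_gt0 : (a.+1%:Z <= 0) = false by [].
by rewrite /concat_path a_gt0 lez_nat ap.
Qed.

Lemma concat_path_future k :
  (size p)%:Z <= k -> concat_path k = r2 (i2 - (size p)%:Z + k).
Proof.
move=> pk; have [kp|pk'] := leP k (size p)%:Z.
  have -> : k = (size p)%:Z by apply/eqP; rewrite eq_le kp.
  by rewrite concat_path_nth // -last_nth -r2_last addrNK.
by rewrite /concat_path !ifF //; lia.
Qed.

Lemma concat_path_solution :
  is_solution K V r1 -> is_solution K V r2 -> Defs.fpath K V x p ->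
  is_solution K V concat_path.
Proof.
move=> sol1 sol2 /(pathP x) step k.
have [k1_le0|k1_gt0] := leP (k + 1) 0.
  by rewrite !concat_path_past ?addrA //; lia.
have [k1n|nk1] := leP (k + 1) (size p)%:Z.
  have [a ka] : exists a : nat, k = a%:Z by exists `|k|%N; lia.
  subst k; have -> : a%:Z + 1 = a.+1%:Z by lia.
  by rewrite !concat_path_nth ?step //; lia.
by rewrite !concat_path_future ?addrA //; lia.
Qed.

Lemma concat_path_essential :
  essential F K V r1 -> essential F K V r2 -> Defs.fpath K V x p ->
  essential F K V concat_path.
Proof.
move=> ess1 ess2 xp; apply: essential_of_changes.
- by apply: concat_path_solution => //; [case: ess1 | case: ess2].
- apply: (@changes_before_from _ 0); apply: changes_before_shift ess1 _.
  exact: concat_path_past.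
- apply: (@changes_after_from _ (size p)%:Z); apply: changes_after_shift ess2 _.
  exact: concat_path_future.
Qed.

End Concatenation.

Lemma in_inv_path T x p :
  Defs.fpath K V x p -> all (mem T) (x :: p) ->
  in_inv F K V T x -> in_inv F K V T (last x p) ->
  forall z, z \in x :: p -> in_inv F K V T z.
Proof.
move=> xp xpT [_ [r1 [ess1 r1T [i1 r1_x]]]] [_ [r2 [ess2 r2T [i2 r2_last]]]] z zxp.
have zT : z \in T by apply: (allP xpT).
split=> //; exists (concat_path r1 r2 i1 i2 x p); split.
- exact: concat_path_essential.
- move=> k; have [k_le0|k_gt0] := leP k 0; first by rewrite concat_path_past.
  have [kn|nk] := leP k (size p)%:Z; last by rewrite concat_path_future ?ltW.
  have [a ka] : exists a : nat, k = a%:Z by exists `|k|%N; lia.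
  subst k; rewrite concat_path_nth -?lez_nat //.
  by apply: (allP xpT); rewrite mem_nth // ltnS -lez_nat.
- exists (seq.index z (x :: p))%:Z.
  by rewrite concat_path_nth ?nth_index // -ltnS index_mem.
Qed.

Definition inv_set T : {set {set Vx}} := [set s | `[< in_inv F K V T s >]].

Lemma inv_setP T s : reflect (in_inv F K V T s) (s \in inv_set T).
Proof. by rewrite inE; apply: asboolP. Qed.

Lemma inv_set_sub T : inv_set T \subset T.
Proof. by apply/subsetP => s /inv_setP[]. Qed.

Lemma image_inv_set T rho :
  essential F K V rho -> image_in rho T -> image_in rho (inv_set T).
Proof. by move=> ess rhoT k; apply/inv_setP; split=> //; exists rho; split=> //; exists k. Qed.

Lemma inv_set_invariant T : Defs.invariant F K V (inv_set T).
Proof.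
move=> s; split=> [[] // | /inv_setP[sT [rho [ess rhoT visit]]]].
split; first by apply/inv_setP; split=> //; exists rho.
by exists rho; split=> //; apply: image_inv_set.
Qed.

Lemma fpath_mv_cycle s t :
  partition V K -> s \in K -> t \in mv V s -> Defs.fpath K V s [:: t; s].
Proof.
move=> /and3P[/eqP cover_V triv_V _] sK ts.
by rewrite /Defs.fpath /= /Fv !inE ts /mv (same_pblock triv_V ts) mem_pblock cover_V sK.
Qed.

Definition path_convex S T := forall x p,
  Defs.fpath K V x p -> all (mem S) (x :: p) -> x \in T -> last x p \in T ->
  all (mem T) (x :: p).

Lemma isolated_inv_set S N T :
  partition V K -> isolated_by F K V S N -> T \subset S -> path_convex S T ->
  isolated_by F K V (inv_set T) N.
Proof.
move=> part [_ clN SN mvS isoS] TS convT.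
have invN : inv_set T \subset N by rewrite (subset_trans (inv_set_sub T)) ?(subset_trans TS).
have isoT x p : Defs.fpath K V x p -> all (mem N) (x :: p) ->
    x \in inv_set T -> last x p \in inv_set T -> all (mem (inv_set T)) (x :: p).
  move=> xp xpN /inv_setP xT /inv_setP lastT.
  have [[x_T _] [last_T _]] := (xT, lastT).
  have xpS : all (mem S) (x :: p) by apply: isoS => //; apply: (subsetP TS).
  have xpT : all (mem T) (x :: p) by apply: convT.
  by apply/allP => z /(in_inv_path xp xpT xT lastT) /inv_setP.
split=> // [|s sT]; first exact: inv_set_invariant.
have sS : s \in S by apply/(subsetP TS)/(subsetP (inv_set_sub T)).
have [sN [NK _]] := (subsetP SN s sS, clN).
apply/subsetP => t ts; have tN : t \in N by apply/(subsetP SN)/(subsetP (mvS s sS)).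
have := isoT s [:: t; s] (fpath_mv_cycle part (subsetP NK s sN) ts).
by rewrite /= sN tN => /(_ isT sT sT) /and3P[].
Qed.

Definition fwd_closed S C := forall s t, s \in C -> t \in S -> t \in Fv K V s -> t \in C.

Lemma fwd_closed_fpath S C x p :
  fwd_closed S C -> Defs.fpath K V x p -> all (mem S) (x :: p) -> x \in C ->
  all (mem C) (x :: p).
Proof.
move=> fwdC; elim: p x => [|y p IHp] x /=; first by move=> _ _ ->.
case/andP=> xy yp /and3P[_ yS pS] xC; rewrite xC; apply: IHp => //=.
  by rewrite yS.
exact: fwdC xy.
Qed.

Lemma fwd_closed_solution S C rho k k' :
  fwd_closed S C -> is_solution K V rho -> image_in rho S -> k <= k' ->
  rho k \in C -> rho k' \in C.
Proof.
move=> fwdC sol rhoS kk' rhokC.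
have rhoC (n : nat) : rho (k + n%:Z) \in C.
  elim: n => [|n IHn]; first by rewrite addr0.
  by rewrite -addn1 PoszD addrA (fwdC _ _ IHn).
by have := rhoC `|k' - k|%N; rewrite gez0_abs ?subr_ge0 // subrKC.
Qed.

Lemma path_convex_fwd_closed S C : fwd_closed S C -> path_convex S C.
Proof. by move=> fwdC x p xp xpS xC _; apply: fwd_closed_fpath fwdC xp xpS xC. Qed.

Lemma path_convex_setD S C : fwd_closed S C -> path_convex S (S :\: C).
Proof.
move=> fwdC x p xp xpS _ lastD; apply/allP => z zxp.
have zS : z \in S by apply: (allP xpS).
change (z \in S :\: C); rewrite inE zS andbT; apply: contraL lastD => zC.
move: xp xpS; case/splitPl: zxp => p1 p2 last_p1.
rewrite /Defs.fpath cat_path last_cat last_p1 -cat_cons all_cat.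
move=> /andP[_ zp2] /andP[_ p2S].
have zp2S : all (mem S) (z :: p2) by rewrite /= zS.
have /allP zp2C := fwd_closed_fpath fwdC zp2 zp2S zC.
by rewrite inE negb_and negbK [_ \in C]zp2C ?mem_last.
Qed.

Lemma fwd_closed_morse_decomposition S N C :
  partition V K -> isolated_by F K V S N -> C \subset S -> fwd_closed S C ->
  morse_decomposition F K V S (fun p q : 'I_2 => p < q)%N
    (fun p => if p == ord0 then inv_set C else inv_set (S :\: C)).
Proof.
move=> part isoS CS fwdC.
have disj : [disjoint inv_set C & inv_set (S :\: C)].
  rewrite disjoint_subset; apply/subsetP => s /inv_setP[sC _].
  by apply/negP => /inv_setP[]; rewrite inE sC.
split.
- exact: ltnn.
- exact: ltn_trans.
- by move=> [[|[|?]] ?] [[|[|?]] ?] //= _; rewrite // disjoint_sym.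
- move=> q; case: ifP => _; split.
  + exact: subset_trans (inv_set_sub C) CS.
  + by exists N; apply: isolated_inv_set isoS CS (path_convex_fwd_closed fwdC).
  + exact: subset_trans (inv_set_sub _) (subsetDl S C).
  + by exists N; apply: isolated_inv_set isoS (subsetDl S C) (path_convex_setD fwdC).
- move=> rho ess rhoS; have [sol _] := ess.
  have [[k1 rhok1C] | never_C] := pselect (exists k, rho k \in C); last first.
    left; exists ord_max; apply: image_inv_set ess _ => k.
    by rewrite inE rhoS andbT; apply/negP => rhokC; apply: never_C; exists k.
  have [[k2 rhok2D] | always_C] := pselect (exists k, rho k \notin C); last first.
    left; exists ord0; apply: image_inv_set ess _ => k.
    by apply: contrapT => /negP rhokD; apply: always_C; exists k.
  right; exists ord0, ord_max; split=> // s.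
  + move=> al; apply/inv_setP/(in_inv_alpha (m := k2) ess _ al) => k kk2.
    rewrite inE rhoS andbT; apply: contra rhok2D.
    exact: fwd_closed_solution fwdC sol rhoS kk2.
  + move=> om; apply/inv_setP/(in_inv_omega (m := k1) ess _ om) => k k1k.
    exact: fwd_closed_solution fwdC sol rhoS k1k rhok1C.
Qed.

Lemma minimal_fwd_closed S N C :
  partition V K -> isolated_by F K V S N -> minimal F K V S ->
  C \subset S -> fwd_closed S C -> C = set0 \/ C = S.
Proof.
move=> part isoS minS CS fwdC; have [invS _ _ _ _] := isoS.
have [invD_S | invD_0] : inv_set (S :\: C) = S \/ inv_set (S :\: C) = set0 :=
  minS _ _ _ (fwd_closed_morse_decomposition part isoS CS fwdC) ord_max.
  left; apply/setP => c; rewrite inE; apply/negP => cC.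
  have : c \in inv_set (S :\: C) by rewrite invD_S (subsetP CS).
  by move/(subsetP (inv_set_sub _)); rewrite inE cC.
right; apply/eqP; rewrite eqEsubset CS; apply/subsetP => s sS; apply: contraT => sNC.
have [_ [rho [ess rhoS [i rhoi]]]] := (invS s).2 sS.
have [s' al] := alpha_exists rho.
suff : s' \in inv_set (S :\: C) by rewrite invD_0 inE.
apply/inv_setP/(in_inv_alpha (m := i) ess _ al) => k ki.
rewrite inE rhoS andbT; apply: contra sNC; rewrite -rhoi.
exact: fwd_closed_solution (proj1 ess) rhoS ki.
Qed.

Definition Fv_rel S : rel {set Vx} := fun u v => [&& u \in S, v \in S & v \in Fv K V u].

Lemma minimal_connect S N a b :
  partition V K -> isolated_by F K V S N -> minimal F K V S ->
  a \in S -> b \in S -> connect (Fv_rel S) a b.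
Proof.
move=> part isoS minS aS bS.
pose C := [set s in S | connect (Fv_rel S) a s].
have CS : C \subset S by apply/subsetP => s; rewrite inE => /andP[].
have fwdC : fwd_closed S C.
  move=> s t + tS ts; rewrite !inE => /andP[sS as_].
  by rewrite tS (connect_trans as_) // connect1 // /Fv_rel sS tS.
have [C0|CS'] := minimal_fwd_closed part isoS minS CS fwdC.
  have : a \in C by rewrite inE aS connect0.
  by rewrite C0 inE.
have : b \in C by rewrite CS'.
by rewrite inE => /andP[].
Qed.

Lemma path_Fv_rel S x p :
  x \in S -> path (Fv_rel S) x p -> Defs.fpath K V x p /\ all (mem S) (x :: p).
Proof.
elim: p x => [|y p IHp] x xS /=; first by rewrite xS.
case/andP=> /and3P[_ yS xy] /(IHp y yS)[yp ypS].
by split; [apply/andP | apply/andP].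
Qed.

End EssentialSolutions.

Lemma Fv_refine (Vx : finType) (K : {set {set Vx}}) (V1 V2 : {set {set {set Vx}}}) u :
  partition V1 K -> partition V2 K -> refines V2 V1 -> u \in K ->
  Fv K V2 u \subset Fv K V1 u.
Proof.
move=> /and3P[/eqP cover1 triv1 _] /and3P[/eqP cover2 _ _] ref uK.
have uV2 : u \in cover V2 by rewrite cover2.
have [B BV1 /subsetP sub] := ref _ (pblock_mem uV2).
have uB : u \in B by apply: sub; rewrite mem_pblock.
by rewrite /Fv /mv (def_pblock triv1 BV1 uB) setSU //; apply/subsetP.
Qed.

Lemma isolated_by_refine (F : fieldType) (Vx : finType) (K N S : {set {set Vx}})
    (V1 V2 : {set {set {set Vx}}}) x p :
  partition V1 K -> partition V2 K -> refines V2 V1 -> isolated_by F K V1 S N ->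
  Defs.fpath K V2 x p -> all (mem N) (x :: p) -> x \in S -> last x p \in S ->
  all (mem S) (x :: p).
Proof.
move=> part1 part2 ref [_ [NK _] _ _ isoS] xp xpN; apply: isoS => //.
apply: sub_in_path xpN xp => u v /(subsetP NK) uK _.
exact/subsetP/Fv_refine.
Qed.

Theorem proposition20 (F : finFieldType) (Vx : finType)
    (K N : {set {set Vx}}) (V1 V2 : {set {set {set Vx}}})
    (M1 M2 : {set {set Vx}}) :
  is_complex K -> is_closed K N ->
  mvf K V1 -> mvf K V2 -> refines V2 V1 ->
  isolated_by F K V1 M1 N ->
  isolated_by F K V2 M2 N -> minimal F K V2 M2 ->
  M1 :&: M2 != set0 ->
  M2 \subset M1.
Proof.
move=> _ _ [part1 _] [part2 _] ref iso1 iso2 min2 /set0Pn[a /setIP[aM1 aM2]].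
have [_ _ M2N _ _] := iso2.
apply/subsetP => s sM2.
have /connectP[p1 a_p1 s_last] := minimal_connect part2 iso2 min2 aM2 sM2.
have /connectP[p2 s_p2 a_last] := minimal_connect part2 iso2 min2 sM2 aM2.
have cycle_a : path (Fv_rel K V2 M2) a (p1 ++ p2) by rewrite cat_path a_p1 -s_last.
have [a_cycle cycleM2] := path_Fv_rel aM2 cycle_a.
have cycleN : all (mem N) (a :: p1 ++ p2) by apply: sub_all cycleM2 => z /(subsetP M2N).
have cycleM1 : all (mem M1) (a :: p1 ++ p2).
  apply: (isolated_by_refine part1 part2 ref iso1 a_cycle cycleN aM1).
  by rewrite last_cat -s_last -a_last.
by apply: (allP cycleM1); rewrite -cat_cons mem_cat s_last mem_last.
Qed.
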